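(* Let $\delta,\delta^\perp$ be positive integers and define $$L_1=\{N\in\Delta(s_1,\dots,s_m)\mid D(N)\ge\delta\},\qquad L_2=\{N\in\Delta(s_1,\dots,s_m)\mid D^\perp(N)<\delta^\perp\}.$$ Suppose $L_2\subsetneq L_1$. Then $C(L_2)\subsetneq C(L_1)$ have codimension $\ell=\#L_1-\#L_2$, and $$M_1(C(L_1),C(L_2))\ge\delta,\qquad M_1(C(L_2)^\perp,C(L_1)^\perp)\ge\delta^\perp.$$
   Context: $q$ is a prime power. For $i=1,\dots,m$, $S_i\subseteq\mathbb{F}_q$ is nonempty with $s_i=\#S_i$; $S=S_1\times\cdots\times S_m=\{\alpha_1,\dots,\alpha_n\}$, $n=\prod_i s_i$. $\Delta(s_1,\dots,s_m)=\{X_1^{i_1}\cdots X_m^{i_m}\mid 0\le i_t<s_t\}$. For $L\subseteq\Delta(s_1,\dots,s_m)$, $C(L)\subseteq\mathbb{F}_q^n$ is the span of $(N(\alpha_1),\dots,N(\alpha_n))$, $N\in L$. For $N=X_1^{i_1}\cdots X_m^{i_m}$: $D(N)=\prod_t(s_t-i_t)$, $D^\perp(N)=\prod_t(i_t+1)$. $C^\perp$ is the Euclidean dual. For linear codes $C_2\subsetneq C_1$, $M_1(C_1,C_2)=\min\{w_H(\vec c)\mid\vec c\in C_1\setminus C_2\}$ (Hamming weight). *)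

From HB Require Import structures.
From mathcomp Require Import all_boot all_order all_algebra all_field.
Set Implicit Arguments. Unset Strict Implicit. Unset Printing Implicit Defensive.
Import GRing.Theory.
Local Open Scope ring_scope.

Section Codes.
Variables (F : finFieldType) (m : nat) (S : 'I_m -> {set F}).

Definition grid : {set {ffun 'I_m -> F}} :=
  [set x : {ffun 'I_m -> F} | [forall t, x t \in S t]].

(* n = #S = prod s_i; the points alpha_1..alpha_n are enum_val of grid. *)
Definition npts : nat := #|grid|.

(* Monomial X_1^{i_1}...X_m^{i_m} encoded by its exponent vector; since
   i_t < s_t <= q = #|F|, exponents live in 'I_#|F|. *)
Definition monom := {ffun 'I_m -> 'I_#|F|}.

Definition Delta : {set monom} :=
  [set e : monom | [forall t, (e t < #|S t|)%N]].

Definition Dw (e : monom) : nat := (\prod_(t < m) (#|S t| - e t))%N.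
Definition Dperp (e : monom) : nat := (\prod_(t < m) (e t + 1))%N.

Definition evalvec (e : monom) : 'rV[F]_npts :=
  \row_(j < npts) \prod_(t < m) ((enum_val j : {ffun 'I_m -> F}) t) ^+ (e t).

(* generator matrix of C(L): its row space is C(L) *)
Definition codeM (L : {set monom}) : 'M[F]_(#|L|, npts) :=
  \matrix_(k < #|L|) evalvec (enum_val k).

End Codes.

(* Euclidean dual: row space of kermx C^T = { u | u *m C^T = 0 }. *)
Definition dualM (F : fieldType) (r n : nat) (C : 'M[F]_(r, n)) : 'M[F]_n :=
  kermx C^T.

Definition hwt (F : fieldType) (n : nat) (u : 'rV[F]_n) : nat :=
  #|[set j : 'I_n | u 0 j != 0]|.

(* M_1(C1,C2) = min weight over C1 \ C2 (codes = row spaces);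
   default value n if C1 \ C2 is empty. *)
Definition M1 (F : finFieldType) (r1 r2 n : nat)
  (C1 : 'M[F]_(r1, n)) (C2 : 'M[F]_(r2, n)) : nat :=
  \big[minn/n]_(u : 'rV[F]_n | (u <= C1)%MS && ~~ (u <= C2)%MS) hwt u.

From HB Require Import structures.
From mathcomp Require Import all_boot all_order all_algebra all_field.
Set Implicit Arguments. Unset Strict Implicit. Unset Printing Implicit Defensive.
Import GRing.Theory.
Local Open Scope ring_scope.

(* The distance bounds are footprint bounds, proved by induction on the grid,
   pinning one coordinate X_i to a single value a0 so that S splits into lines
   parallel to the i-th axis.
   A nonzero f supported on Delta: let K be the largest exponent of X_i in its
   support.  The part of f of degree K in X_i has, by induction, some monomial e'
   of its support nonzero at >= D(e') points of the pinned grid; on the line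
   through each of them f restricts to a nonzero polynomial of degree <= K, which
   is nonzero at >= s_i - K points.  So f has weight >= D(X_i^K e').
   A nonzero word u: let k be least such that the k-th moment
   sum_a u(..a..) a^k along the lines is not identically 0.  By induction some e'
   in Delta pairs nonzero with that moment and D^perp(e') <= its weight; on each
   line where it is nonzero the lower moments vanish, so u has > k nonzero values
   there (Vandermonde).  Hence X_i^k e' is in Delta, pairs nonzero with u, and
   D^perp(X_i^k e') <= wt u.  Applied to L1 and to a word orthogonal to C(L2)
   this yields both bounds; the first argument also shows that evaluation is
   injective on Delta, which gives the dimensions. *)

Section FfunUpdate.
Variables (m : nat) (U : Type).
Implicit Types (f : {ffun 'I_m -> U}) (i : 'I_m).

Definition fupd f i (a : U) : {ffun 'I_m -> U} :=
  [ffun t => if t == i then a else f t].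

Lemma fupd_eq f i a : fupd f i a i = a.
Proof. by rewrite ffunE eqxx. Qed.

Lemma fupd_neq f i a t : t != i -> fupd f i a t = f t.
Proof. by rewrite ffunE => /negbTE ->. Qed.

Lemma fupd_fupd f i a b : fupd (fupd f i a) i b = fupd f i b.
Proof. by apply/ffunP => t; rewrite !ffunE; case: eqP. Qed.

Lemma fupd_id f i : fupd f i (f i) = f.
Proof. by apply/ffunP => t; rewrite !ffunE; case: eqP => // ->. Qed.

End FfunUpdate.

Lemma big_ffun_coord (m : nat) (U : finType) (R : Type) (idx : R)
    (op : Monoid.com_law idx) (i : 'I_m) (u0 : U)
    (P : pred {ffun 'I_m -> U}) (G : {ffun 'I_m -> U} -> R) :
  \big[op/idx]_(x | P x) G x =
  \big[op/idx]_(a : U) \big[op/idx]_(x : {ffun 'I_m -> U} | (x i == u0) && P (fupd x i a))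
     G (fupd x i a).
Proof.
rewrite (partition_big (fun x : {ffun 'I_m -> U} => x i) predT) //=.
apply: eq_bigr => a _.
rewrite (reindex_onto (fun x => fupd x i a) (fun x => fupd x i u0)); last first.
  by move=> x /andP[_ /eqP <-]; rewrite fupd_fupd fupd_id.
apply: eq_bigl => x; rewrite fupd_fupd fupd_eq eqxx andbT andbC.
by congr (_ && _); apply/eqP/eqP => [<-|<-]; rewrite ?fupd_eq ?fupd_id.
Qed.

Lemma sum_nat_card (T : finType) (A : {pred T}) (P : pred T) :
  (\sum_(a in A) P a)%N = #|[set a in A | P a]|.
Proof.
rewrite -sum1_card [RHS]big_mkcond [LHS]big_mkcond /=; apply: eq_bigr => a _.
by rewrite inE; case: (a \in A); case: (P a).
Qed.

Section Univariate.
Variable F : finIdomainType.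
Implicit Types (A : {set F}) (v : F -> F).

Lemma card_nonroots_ge A (p : {poly F}) k : p != 0 -> (size p <= k.+1)%N ->
  (#|A| - k <= #|[set a in A | p.[a] != 0%R]|)%N.
Proof.
move=> p0 sp.
have roots_le : (#|[set a in A | root p a]| <= k)%N.
  rewrite cardE -ltnS; apply: leq_trans sp.
  apply: max_poly_roots => //; last exact: enum_uniq.
  by apply/allP => a; rewrite mem_enum inE => /andP[].
rewrite -(cardsID [set a | root p a] A) leq_subLR leq_add //.
  rewrite (leq_trans _ roots_le) // subset_leq_card //.
  by apply/subsetP => a; rewrite !inE.
by rewrite subset_leq_card //; apply/subsetP => a; rewrite !inE andbC.
Qed.

(* Pairing v against the polynomial vanishing on supp v \ {b0} isolates v b0. *)
Lemma moments_eq0 A v k :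
  (forall j, (j < k)%N -> \sum_(a in A) v a * a ^+ j = 0) ->
  (#|[set a in A | v a != 0%R]| <= k)%N -> {in A, forall a, v a = 0}.
Proof.
move=> moments0 supp_le b0 Ab0; apply: contraTeq isT => vb0.
set B := [set a in A | v a != 0] :\ b0.
pose p := \prod_(b <- enum B) ('X - b%:P).
have sp : (size p <= k)%N.
  rewrite size_prod_XsubC -cardE; apply: leq_trans supp_le.
  by rewrite (cardsD1 b0 [set a in A | v a != 0]) !inE Ab0 vb0.
have pb0 : p.[b0] != 0.
  rewrite horner_prod prodf_seq_neq0; apply/allP => b; rewrite mem_enum !inE.
  by rewrite hornerXsubC subr_eq0 eq_sym => /andP[].
have : \sum_(a in A) v a * p.[a] = 0.
  under eq_bigr do rewrite horner_coef big_distrr.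
  rewrite exchange_big big1 //= => j _.
  under eq_bigr do rewrite mulrCA.
  by rewrite -big_distrr moments0 ?(leq_trans (ltn_ord j) sp) //; apply: mulr0.
move=> /eqP; rewrite (bigD1 b0) //= big1 ?addr0 => [|a /andP[Aa ab0]].
  by rewrite mulf_eq0 (negbTE pb0) (negbTE vb0).
have [-> | va0] := eqVneq (v a) 0; first by rewrite mul0r.
apply/eqP; rewrite mulf_eq0 horner_prod prodf_seq_eq0; apply/orP; right.
apply/hasP; exists a; first by rewrite mem_enum !inE ab0 Aa va0.
by rewrite hornerXsubC subrr eqxx.
Qed.

Lemma exists_moment_neq0 A v : (exists2 b, b \in A & v b != 0) ->
  exists2 j, (j < #|A|)%N & \sum_(a in A) v a * a ^+ j != 0.
Proof.
move=> [b A_b v_b]; have [/existsP[j mj] | /existsPn moments0] :=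
  boolP [exists j : 'I_#|A|, \sum_(a in A) v a * a ^+ j != 0]; first by exists j.
suff /(_ b A_b) /eqP : {in A, forall a, v a = 0} by rewrite (negbTE v_b).
apply: (@moments_eq0 _ _ #|A|) => [j j_lt|].
  by apply/eqP; have := moments0 (Ordinal j_lt); rewrite negbK.
by apply/subset_leq_card/subsetP => a; rewrite inE => /andP[].
Qed.

End Univariate.

Section Grid.
Variables (F : finFieldType) (m : nat).
Local Notation point := {ffun 'I_m -> F}.
Implicit Types (S : 'I_m -> {set F}) (i : 'I_m).

Definition pin S i (a0 : F) : 'I_m -> {set F} :=
  fun t => if t == i then [set a0] else S t.

Lemma pin_neq0 S i a0 : (forall t, S t != set0) -> forall t, pin S i a0 t != set0.
Proof.
move=> S_neq0 t; rewrite /pin; case: (t =P i) => // _.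
by apply/set0Pn; exists a0; rewrite inE.
Qed.

Lemma sum_card_pin S i a0 : (1 < #|S i|)%N ->
  (\sum_t #|pin S i a0 t| < \sum_t #|S t|)%N.
Proof.
move=> S_i_gt1; rewrite (bigD1 i) // [X in (_ < X)%N](bigD1 i) //= /pin eqxx cards1.
by rewrite -addSn leq_add // eq_leq //; apply: eq_bigr => t /negbTE ->.
Qed.

Lemma grid_ind (P : ('I_m -> {set F}) -> Prop) :
  (forall S, (forall t, #|S t| = 1%N) -> P S) ->
  (forall S i a0, a0 \in S i -> P (pin S i a0) -> P S) ->
  forall S, (forall t, S t != set0) -> P S.
Proof.
move=> Pbase Pstep S; move Hn: (\sum_t #|S t|)%N => n.
elim/ltn_ind: n S Hn => n IH S Hn S_neq0; subst n.
have [/existsP[i S_i_gt1] | /existsPn S_le1] := boolP [exists t, 1 < #|S t|]%N.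
  have /set0Pn[a0 S_i_a0] := S_neq0 i.
  apply: (Pstep _ _ _ S_i_a0).
  exact: IH (sum_card_pin a0 S_i_gt1) _ erefl (pin_neq0 i a0 S_neq0).
apply: Pbase => t; apply/eqP; rewrite eqn_leq card_gt0 S_neq0 andbT.
by rewrite leqNgt S_le1.
Qed.

Lemma grid_fupd_pin S i a0 (x : point) a : a0 \in S i ->
  (x i == a0) && (fupd x i a \in grid S) = (a \in S i) && (x \in grid (pin S i a0)).
Proof.
move=> S_i_a0; rewrite /grid !inE /pin.
apply/andP/andP => [[/eqP x_i /forallP x_S] | [S_i_a /forallP x_S]].
  split; first by have := x_S i; rewrite fupd_eq.
  apply/forallP => t; case: eqP => [->|/eqP t_i]; first by rewrite x_i inE.
  by have := x_S t; rewrite fupd_neq.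
split; first by have := x_S i; rewrite eqxx inE.
apply/forallP => t; case: (t =P i) => [->|/eqP t_i]; first by rewrite fupd_eq.
by rewrite fupd_neq //; have := x_S t; rewrite (negbTE t_i).
Qed.

Lemma big_grid_pin (R : Type) (idx : R) (op : Monoid.com_law idx)
    S i a0 (G : point -> R) : a0 \in S i ->
  \big[op/idx]_(x in grid S) G x =
  \big[op/idx]_(a in S i) \big[op/idx]_(x in grid (pin S i a0)) G (fupd x i a).
Proof.
move=> S_i_a0; rewrite (big_ffun_coord _ i a0) [RHS]big_mkcond /=.
apply: eq_bigr => a _; under eq_bigl => x do rewrite grid_fupd_pin //.
by case: (a \in S i) => /=; rewrite ?big_pred0_eq.
Qed.

Definition wt S (f : point -> F) : nat := #|[set x in grid S | f x != 0]|.

Lemma wt_pin_ge S i a0 (f g : point -> F) k : a0 \in S i ->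
  (forall x, x \in grid (pin S i a0) -> g x != 0 ->
     (k <= #|[set a in S i | f (fupd x i a) != 0%R]|)%N) ->
  (k * wt (pin S i a0) g <= wt S f)%N.
Proof.
move=> S_i_a0 fibre_ge; rewrite /wt -!sum_nat_card (big_grid_pin _ _ S_i_a0).
rewrite exchange_big big_distrr /=; apply: leq_sum => x x_pin.
case: (boolP (g x != 0)) => [/(fibre_ge _ x_pin) | _]; last by rewrite muln0.
by rewrite muln1 sum_nat_card.
Qed.

End Grid.

Section Monomials.
Variables (F : finFieldType) (m : nat).
Local Notation point := {ffun 'I_m -> F}.
Local Notation monom := (monom F m).
Implicit Types (S : 'I_m -> {set F}) (i : 'I_m) (e : monom) (x : point).

Definition exp0 : 'I_#|F| := Ordinal (ltnW (card_finNzRing_gt1 F)).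

Definition mono e x : F := \prod_t x t ^+ e t.

Lemma mono_fupd e x i (k : 'I_#|F|) a : e i = 0%N :> nat ->
  mono (fupd e i k) (fupd x i a) = a ^+ k * mono e x.
Proof.
move=> e_i; rewrite /mono (bigD1 i) // [in RHS](bigD1 i) //= e_i mul1r !fupd_eq.
by congr (_ * _); apply: eq_bigr => t t_i; rewrite !fupd_neq.
Qed.

Lemma Delta_pin_exp0 S i a0 e : e \in Delta (pin S i a0) -> e i = 0%N :> nat.
Proof. by rewrite inE => /forallP/(_ i); rewrite /pin eqxx cards1 ltnS leqn0 => /eqP. Qed.

Lemma fupd_Delta_pin S i a0 e (k : 'I_#|F|) : e i = 0%N :> nat ->
  (fupd e i k \in Delta S) = (k < #|S i|)%N && (e \in Delta (pin S i a0)).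
Proof.
move=> e_i; rewrite !inE /pin; apply/forallP/andP => [e_S | [k_lt /forallP e_S] t].
  split; first by have := e_S i; rewrite fupd_eq.
  apply/forallP => t; case: (t =P i) => [->|/eqP t_i]; first by rewrite e_i cards1.
  by have := e_S t; rewrite fupd_neq.
case: (t =P i) => [->|/eqP t_i]; first by rewrite fupd_eq.
by rewrite fupd_neq //; have := e_S t; rewrite (negbTE t_i).
Qed.

Lemma Dw_fupd S i a0 e (k : 'I_#|F|) : e i = 0%N :> nat ->
  Dw S (fupd e i k) = ((#|S i| - k) * Dw (pin S i a0) e)%N.
Proof.
move=> e_i; rewrite /Dw (bigD1 i) //= [in RHS](bigD1 i) //= /pin eqxx cards1 e_i.
rewrite fupd_eq mul1n; congr (_ * _)%N; apply: eq_bigr => t t_i.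
by rewrite fupd_neq // (negbTE t_i).
Qed.

Lemma Dw_gt0 S e : e \in Delta S -> (0 < Dw S e)%N.
Proof. by rewrite inE => /forallP e_S; rewrite prodn_gt0 // => t; rewrite subn_gt0. Qed.

Lemma Dperp_fupd i e (k : 'I_#|F|) : e i = 0%N :> nat ->
  Dperp (fupd e i k) = (k.+1 * Dperp e)%N.
Proof.
move=> e_i; rewrite /Dperp (bigD1 i) //= [in RHS](bigD1 i) //= e_i fupd_eq addn1.
by rewrite add0n mul1n; congr (_ * _)%N; apply: eq_bigr => t t_i; rewrite fupd_neq.
Qed.

End Monomials.

Section Footprint.
Variables (F : finFieldType) (m : nat).
Local Notation point := {ffun 'I_m -> F}.
Local Notation monom := (monom F m).
Implicit Types (S : 'I_m -> {set F}) (i : 'I_m) (e : monom) (x : point).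
Implicit Types (c : monom -> F).

Lemma grid_pick S : (forall t, S t != set0) ->
  [ffun t => odflt 0 [pick a in S t]] \in grid S.
Proof.
move=> S_neq0; rewrite inE; apply/forallP => t; rewrite ffunE.
case: pickP => //= S_t0; have /set0Pn[a S_t_a] := S_neq0 t.
by have := S_t0 a; rewrite S_t_a.
Qed.

Lemma Delta_card1 S e : (forall t, #|S t| = 1%N) -> e \in Delta S -> e = [ffun=> exp0 F].
Proof.
move=> S_1 /[!inE] /forallP e_S; apply/ffunP => t; apply: val_inj.
by apply/eqP; rewrite ffunE /= -leqn0 -ltnS -(S_1 t).
Qed.

Definition ev c x : F := \sum_e c e * mono e x.

Definition slice c i (k : 'I_#|F|) e : F :=
  if e i == exp0 F then c (fupd e i k) else 0.

Lemma ev_fupd c i x a :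
  ev c (fupd x i a) = \sum_(k < #|F|) ev (slice c i k) x * a ^+ k.
Proof.
rewrite /ev (big_ffun_coord _ i (exp0 F)); apply: eq_bigr => k _.
rewrite mulr_suml big_mkcond; apply: eq_bigr => e _; rewrite andbT /slice.
case: eqP => [e_i|_]; last by rewrite !mul0r.
by rewrite mono_fupd ?e_i // mulrCA mulrC.
Qed.

Lemma card_fibre_ev_ge S i c (K : 'I_#|F|) x :
  (forall e, c e != 0 -> (e i <= K)%N) -> ev (slice c i K) x != 0 ->
  (#|S i| - K <= #|[set a in S i | ev c (fupd x i a) != 0%R]|)%N.
Proof.
move=> deg_le ev_K.
pose p := \poly_(j < #|F|) ev (slice c i (insubd (exp0 F) j)) x.
have p_ev a : p.[a] = ev c (fupd x i a).
  by rewrite horner_poly ev_fupd; apply: eq_bigr => k _; rewrite valKd.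
have p_neq0 : p != 0.
  apply: contraNneq ev_K => /(congr1 (fun q : {poly F} => q`_K)).
  by rewrite coef_poly ltn_ord valKd coef0 => ->.
have size_p : (size p <= K.+1)%N.
  apply/leq_sizeP => j K_lt_j; rewrite coef_poly; case: ifP => // j_lt.
  rewrite /ev big1 // => e _; rewrite /slice; case: eqP => _; last by rewrite mul0r.
  have [-> | c_e] := eqVneq (c (fupd e i (insubd (exp0 F) j))) 0; first by rewrite mul0r.
  by have := deg_le _ c_e; rewrite fupd_eq val_insubd j_lt leqNgt K_lt_j.
by under eq_finset => a do rewrite -p_ev; apply: card_nonroots_ge.
Qed.

Definition footprint_bound S := forall c,
  (forall e, c e != 0 -> e \in Delta S) -> (exists e, c e != 0) ->
  exists2 e, c e != 0 & (Dw S e <= wt S (ev c))%N.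

Lemma footprint_bound_card1 S : (forall t, #|S t| = 1%N) -> footprint_bound S.
Proof.
move=> S_1 c c_Delta [e1 c_e1]; exists e1 => //.
have S_neq0 t : S t != set0 by rewrite -card_gt0 S_1.
have e1_0 := Delta_card1 S_1 (c_Delta _ c_e1).
have -> : Dw S e1 = 1%N by rewrite /Dw big1 // => t _; rewrite e1_0 ffunE S_1.
apply/card_gt0P; exists [ffun t => odflt 0 [pick a in S t]].
rewrite inE grid_pick //= /ev (bigD1 e1) //= big1 ?addr0 => [|e e_e1].
  by rewrite /mono big1 ?mulr1 // => t _; rewrite e1_0 !ffunE expr0.
have [-> | c_e] := eqVneq (c e) 0; first by rewrite mul0r.
by case/eqP: e_e1; rewrite e1_0 (Delta_card1 S_1 (c_Delta _ c_e)).
Qed.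

Lemma footprint_bound_pin S i a0 : a0 \in S i ->
  footprint_bound (pin S i a0) -> footprint_bound S.
Proof.
move=> S_i_a0 IH c c_Delta [e0 c_e0].
have [eK c_eK K_max] :=
  @arg_maxnP _ e0 (fun e => c e != 0) (fun e => nat_of_ord (e i)) c_e0.
set K := eK i.
have slice_Delta e : slice c i K e != 0 -> e \in Delta (pin S i a0).
  rewrite /slice; case: (e i =P exp0 F) => [e_i /c_Delta | _]; last by rewrite eqxx.
  by rewrite (fupd_Delta_pin _ a0) ?e_i // => /andP[].
have slice_neq0 : exists e, slice c i K e != 0.
  by exists (fupd eK i (exp0 F)); rewrite /slice fupd_eq eqxx fupd_fupd fupd_id.
have [e' c_e' Dw_e'] := IH _ slice_Delta slice_neq0.
move: c_e'; rewrite /slice; case: (e' i =P exp0 F) => [e'_i c_e'|_]; last by rewrite eqxx.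
exists (fupd e' i K) => //.
rewrite (Dw_fupd _ a0) ?e'_i //; apply: leq_trans (leq_mul (leqnn _) Dw_e') _.
by apply: wt_pin_ge => // x _; apply: card_fibre_ev_ge => e /K_max.
Qed.

Theorem footprint S : (forall t, S t != set0) -> footprint_bound S.
Proof.
apply: grid_ind; first exact: footprint_bound_card1.
exact: footprint_bound_pin.
Qed.

End Footprint.

Section DualFootprint.
Variables (F : finFieldType) (m : nat).
Local Notation point := {ffun 'I_m -> F}.
Local Notation monom := (monom F m).
Implicit Types (S : 'I_m -> {set F}) (i : 'I_m) (e : monom) (x : point).
Implicit Types (u : point -> F).

Definition ip S u e : F := \sum_(x in grid S) u x * mono e x.

Definition moment (A : {set F}) u i (k : nat) x : F :=
  \sum_(a in A) u (fupd x i a) * a ^+ k.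

Lemma ip_fupd S i a0 u e (k : 'I_#|F|) : a0 \in S i -> e i = 0%N :> nat ->
  ip S u (fupd e i k) = ip (pin S i a0) (moment (S i) u i k) e.
Proof.
move=> S_i_a0 e_i; rewrite /ip (big_grid_pin _ _ S_i_a0) exchange_big /=.
apply: eq_bigr => x _; rewrite mulr_suml; apply: eq_bigr => a _.
by rewrite mono_fupd // mulrA.
Qed.

Definition dual_footprint_bound S := forall u,
  (exists2 x, x \in grid S & u x != 0) ->
  exists e, [/\ e \in Delta S, ip S u e != 0 & (Dperp e <= wt S u)%N].

Lemma dual_footprint_bound_card1 S : (forall t, #|S t| = 1%N) -> dual_footprint_bound S.
Proof.
move=> S_1 u [x x_S u_x]; exists [ffun=> exp0 F]; split.
- by rewrite inE; apply/forallP => t; rewrite ffunE S_1.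
- rewrite /ip (bigD1 x) //= big1 ?addr0 => [|y /andP[y_S y_x]].
    by rewrite /mono big1 ?mulr1 // => t _; rewrite ffunE expr0.
  case/eqP: y_x; apply/ffunP => t; move: x_S y_S; rewrite !inE.
  move=> /forallP/(_ t) x_t /forallP/(_ t) y_t.
  have /card_le1_eqP : (#|S t| <= 1)%N by rewrite S_1.
  by apply.
- rewrite /Dperp big1 => [|t _]; last by rewrite ffunE.
  by apply/card_gt0P; exists x; rewrite inE x_S.
Qed.

Lemma dual_footprint_bound_pin S i a0 : a0 \in S i ->
  dual_footprint_bound (pin S i a0) -> dual_footprint_bound S.
Proof.
move=> S_i_a0 IH u [x x_S u_x].
pose P k := [exists y in grid (pin S i a0), moment (S i) u i k y != 0].
have [j j_lt Pj] : exists2 j, (j < #|S i|)%N & P j.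
  have y_pin : fupd x i a0 \in grid (pin S i a0).
    have := grid_fupd_pin (fupd x i a0) (x i) S_i_a0.
    by rewrite fupd_eq eqxx fupd_fupd fupd_id x_S => /esym/andP[].
  have [|j j_lt mj] := @exists_moment_neq0 _ (S i) (fun a => u (fupd (fupd x i a0) i a)).
    exists (x i); last by rewrite fupd_fupd fupd_id.
    by move: x_S; rewrite inE => /forallP.
  by exists j => //; apply/exists_inP; exists (fupd x i a0).
have [k Pk k_min] := ex_minnP (ex_intro P j Pj).
have k_lt : (k < #|F|)%N := leq_ltn_trans (k_min j Pj) (leq_trans j_lt (max_card _)).
have [|e' [e'_Delta ip_e' Dperp_e']] := IH (moment (S i) u i k).
  by case/exists_inP: Pk => y; exists y.
have e'_i := Delta_pin_exp0 e'_Delta.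
exists (fupd e' i (Ordinal k_lt)); split.
- by rewrite (fupd_Delta_pin _ a0) // e'_Delta andbT (leq_ltn_trans (k_min j Pj)).
- by rewrite (ip_fupd _ _ S_i_a0).
rewrite Dperp_fupd //; apply: leq_trans (leq_mul (leqnn _) Dperp_e') _.
apply: wt_pin_ge => // y y_pin m_k; rewrite ltnNge; apply: contraNN m_k => supp_le.
rewrite /moment big1 // => a S_i_a.
rewrite (moments_eq0 _ supp_le S_i_a) ?mul0r // => l l_lt.
apply/eqP; apply: contraTT l_lt => m_l; rewrite -leqNgt k_min //.
by apply/exists_inP; exists y.
Qed.

Theorem dual_footprint S : (forall t, S t != set0) -> dual_footprint_bound S.
Proof.
apply: grid_ind; first exact: dual_footprint_bound_card1.
exact: dual_footprint_bound_pin.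
Qed.

End DualFootprint.

Section RowFunction.
Variables (R : pzSemiRingType) (T : finType) (A : {set T}).
Implicit Types (v : 'rV[R]_#|A|).

Definition rowfun v (x : T) : R := \sum_(k | enum_val k == x) v 0 k.

Lemma rowfun_enum_val v k : rowfun v (enum_val k) = v 0 k.
Proof. by rewrite /rowfun (big_pred1 k) // => l; rewrite /= (inj_eq enum_val_inj). Qed.

Lemma rowfun_notin v x : x \notin A -> rowfun v x = 0.
Proof.
move=> A'x; rewrite /rowfun big_pred0 // => k; apply: contraNF A'x => /eqP <-.
exact: enum_valP.
Qed.

Lemma sum_rowfun v (G : T -> R) :
  \sum_k v 0 k * G (enum_val k) = \sum_x rowfun v x * G x.
Proof.
rewrite (partition_big enum_val predT) //; apply: eq_bigr => x _.
by rewrite mulr_suml; apply: eq_bigr => k /eqP ->.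
Qed.

End RowFunction.

Lemma hwt_enum_val (F : fieldType) (T : finType) (A : {set T}) (u : 'rV[F]_#|A|)
    (f : T -> F) :
  (forall k, u 0 k = f (enum_val k)) -> hwt u = #|[set x in A | f x != 0]|.
Proof.
move=> u_f; rewrite /hwt -(card_imset _ enum_val_inj); apply: eq_card => x.
rewrite inE; apply/imsetP/andP => [[k] | [A_x f_x]].
  by rewrite inE u_f => f_k ->; rewrite enum_valP.
exists (enum_rank_in A_x x); last by rewrite enum_rankK_in.
by rewrite inE (u_f (enum_rank_in A_x x)) enum_rankK_in.
Qed.

Lemma hwt0 (F : fieldType) (n : nat) : hwt (0 : 'rV[F]_n) = 0%N.
Proof. by apply/eqP; rewrite cards_eq0; apply/eqP/setP => j; rewrite !inE mxE eqxx. Qed.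

Section Codes.
Variables (F : finFieldType) (m : nat) (S : 'I_m -> {set F}).
Hypothesis S_neq0 : forall t, S t != set0.
Local Notation monom := (monom F m).
Implicit Types (L : {set monom}) (e : monom).

Lemma mul_codeM L (v : 'rV[F]_#|L|) j :
  (v *m codeM S L) 0 j = ev (rowfun v) (enum_val j).
Proof.
rewrite mxE /ev -sum_rowfun; apply: eq_bigr => k _.
by rewrite !mxE.
Qed.

Lemma mul_codeM_tr L (u : 'rV[F]_(npts S)) k :
  (u *m (codeM S L)^T) 0 k = ip S (rowfun u) (enum_val k).
Proof.
rewrite mxE /ip (eq_bigr (fun j => u 0 j * mono (enum_val k) (enum_val j))).
  rewrite sum_rowfun [RHS]big_mkcond /=; apply: eq_bigr => x _.
  by case: ifPn => // /rowfun_notin ->; rewrite mul0r.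
by move=> j _; rewrite !mxE.
Qed.

Lemma codeM_sub L1 L2 : L2 \subset L1 -> (codeM S L2 <= codeM S L1)%MS.
Proof.
move=> L21; apply/row_subP => k; have L1_k := subsetP L21 _ (enum_valP k).
rewrite rowK -(enum_rankK_in L1_k L1_k).
by rewrite -(rowK (fun l => evalvec S (enum_val l))) row_sub.
Qed.

Lemma footprint_codeM L (v : 'rV[F]_#|L|) : L \subset Delta S -> v != 0 ->
  exists2 e, e \in L & (Dw S e <= hwt (v *m codeM S L))%N.
Proof.
move=> L_Delta /rV0Pn[k v_k].
have c_Delta e : rowfun v e != 0 -> e \in Delta S.
  by apply: contraR => /(contra (subsetP L_Delta e))/rowfun_notin ->.
have [|e c_e Dw_e] := footprint S_neq0 c_Delta.
  by exists (enum_val k); rewrite rowfun_enum_val.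
exists e; first by apply: contraNT c_e => /rowfun_notin ->.
by rewrite (hwt_enum_val (mul_codeM v)).
Qed.

Lemma rank_codeM L : L \subset Delta S -> \rank (codeM S L) = #|L|.
Proof.
move=> L_Delta; apply/eqP; rewrite eqn_leq rank_leq_row row_leq_rank.
apply/inj_row_free => v vC0; apply: contraTeq isT => /(footprint_codeM L_Delta)[e L_e].
rewrite vC0 hwt0 leqn0 => /eqP Dw0.
by have := Dw_gt0 (subsetP L_Delta _ L_e); rewrite Dw0.
Qed.

Lemma dual_footprint_codeM L (u : 'rV[F]_(npts S)) :
  u *m (codeM S L)^T = 0 -> u != 0 ->
  exists e, [/\ e \in Delta S, e \notin L & (Dperp e <= hwt u)%N].
Proof.
move=> uC0 /rV0Pn[j u_j].
have [|e [e_Delta ip_e Dperp_e]] := dual_footprint S_neq0 (u := rowfun u).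
  by exists (enum_val j); rewrite ?enum_valP ?rowfun_enum_val.
have hwt_u : hwt u = wt S (rowfun u).
  exact: hwt_enum_val (fun k => esym (rowfun_enum_val u k)).
exists e; split; rewrite ?hwt_u //.
apply: contra ip_e => L_e; rewrite -(enum_rankK_in L_e L_e) -mul_codeM_tr uC0.
by rewrite mxE.
Qed.

(* The indicator of the monomial e has weight at most n, and its only possible
   footprint is e itself. *)
Lemma Dw_le_npts e : e \in Delta S -> (Dw S e <= npts S)%N.
Proof.
move=> e_Delta; pose c e' : F := (e' == e)%:R.
have c_Delta e' : c e' != 0 -> e' \in Delta S.
  by rewrite /c; case: (e' =P e) => [-> | _]; rewrite ?eqxx.
have [|e' c_e' Dw_e'] := footprint S_neq0 c_Delta.
  by exists e; rewrite /c eqxx oner_eq0.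
move: c_e'; rewrite /c; case: (e' =P e) => [<- _ | _]; last by rewrite eqxx.
apply: leq_trans Dw_e' _; rewrite /wt /npts subset_leq_card //.
by apply/subsetP => x; rewrite inE => /andP[].
Qed.

(* Reflecting every exponent e_t to s_t - 1 - e_t turns D^perp into D. *)
Lemma Dperp_le_npts e : e \in Delta S -> (Dperp e <= npts S)%N.
Proof.
rewrite inE => /forallP e_S.
have refl_lt t : (#|S t| - (e t).+1 < #|F|)%N.
  apply: leq_trans (max_card (mem (S t))).
  by rewrite ltn_subrL /= (leq_ltn_trans _ (e_S t)).
pose e' : monom := [ffun t => Ordinal (refl_lt t)].
have e'_Delta : e' \in Delta S.
  rewrite inE; apply/forallP => t.
  by rewrite ffunE /= ltn_subrL /= (leq_ltn_trans _ (e_S t)).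
have <- : Dw S e' = Dperp e.
  by apply: eq_bigr => t _; rewrite ffunE /= subKn ?addn1.
exact: Dw_le_npts.
Qed.

End Codes.

Lemma M1_ge (F : finFieldType) (r1 r2 n : nat)
    (C1 : 'M[F]_(r1, n)) (C2 : 'M[F]_(r2, n)) (d : nat) :
  (d <= n)%N -> (forall u, (u <= C1)%MS -> ~~ (u <= C2)%MS -> (d <= hwt u)%N) ->
  (d <= M1 C1 C2)%N.
Proof.
move=> d_le_n wt_ge; rewrite /M1.
by elim/big_ind: _ => // [x y | u /andP[]]; [rewrite leq_min => -> -> | apply: wt_ge].
Qed.

Theorem mainTheorem2 (F : finFieldType) (m : nat) (S : 'I_m -> {set F})
  (HS : forall t, S t != set0) (delta deltap : nat)
  (Hd : (0 < delta)%N) (Hdp : (0 < deltap)%N) :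
  let L1 := [set e in Delta S | (delta <= Dw S e)%N] in
  let L2 := [set e in Delta S | (Dperp e < deltap)%N] in
  L2 \proper L1 ->
  (codeM S L2 < codeM S L1)%MS /\
  (\rank (codeM S L1) - \rank (codeM S L2) = #|L1| - #|L2|)%N /\
  (delta <= M1 (codeM S L1) (codeM S L2))%N /\
  (deltap <= M1 (dualM (codeM S L2)) (dualM (codeM S L1)))%N.
Proof.
move=> L1 L2 L21; have [L2_L1 [e1 L1_e1 L2'e1]] := properP L21.
have L1_Delta : L1 \subset Delta S by apply/subsetP => e; rewrite inE => /andP[].
have L2_Delta : L2 \subset Delta S by apply/subsetP => e; rewrite inE => /andP[].
have e1_Delta := subsetP L1_Delta _ L1_e1.
have delta_le e : e \in L1 -> (delta <= Dw S e)%N by rewrite inE => /andP[].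
have deltap_le e : e \in Delta S -> e \notin L2 -> (deltap <= Dperp e)%N.
  by move=> e_Delta; rewrite inE e_Delta -leqNgt.
split; first by rewrite ltmxErank codeM_sub // !rank_codeM // proper_card.
split; first by rewrite !rank_codeM.
split.
  apply: M1_ge => [|_ /submxP[v ->] vC2].
    exact: leq_trans (delta_le _ L1_e1) (Dw_le_npts HS e1_Delta).
  have v_neq0 : v != 0 by apply: contraNneq vC2 => ->; rewrite mul0mx sub0mx.
  by have [e /delta_le/leq_trans] := footprint_codeM HS L1_Delta v_neq0; apply.
apply: M1_ge => [|u /sub_kermxP uC2 uC1].
  exact: leq_trans (deltap_le _ e1_Delta L2'e1) (Dperp_le_npts HS e1_Delta).
have u_neq0 : u != 0 by apply: contraNneq uC1 => ->; rewrite sub0mx.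
have [e [e_Delta L2'e Dperp_e]] := dual_footprint_codeM HS uC2 u_neq0.
exact: leq_trans (deltap_le _ e_Delta L2'e) Dperp_e.
Qed.
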